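(* Let $i,j\in J$ be two jobs with $\varphi_i(0)>\varphi_j(0)$, $w_ip_j\neq w_jp_i$ and $t^*_{ij}\in(0,T)$. If in a complete schedule $S$ job $i$ starts at a time $t_i\in[t^*_{ij},t^*_{ij}+p_j)$, then $S$ is not a potential schedule.
   Context: $J$ is a finite set of jobs; job $j$ has processing time $p_j>0$ and weight $w_j>0$; $T=\sum_{j\in J}p_j$. A complete schedule is an ordering of $J$ processed consecutively without idle time from time $0$; job $j$ has start time $t_j$. For $t\ge 0$, $\varphi_j(t)=\frac{w_j}{p_j(p_j+t)}$. For jobs $i,j$ with $w_ip_j\neq w_jp_i$, $t^*_{ij}=\frac{w_jp_i^2-w_ip_j^2}{w_ip_j-w_jp_i}$ (the unique real $t$ with $\varphi_i(t)=\varphi_j(t)$). Dominance rule: for an interval $I\subseteq[0,\infty)$, the relation ''$i$ dominates $j$ on $I$'' is violated by a schedule if $j$ is processed before $i$ and both $t_j\in I$ and $t_i-p_j\in I$. The rule contains, for each pair of distinct jobs $i,j$ with $(p_i,w_i)\ne(p_j,w_j)$: (1) if $\varphi_i(t)\ge\varphi_j(t)$ for all $t\ge 0$, ''$i$ dominates $j$ on $[0,\infty)$''; (2) otherwise, if $\varphi_j(t)\ge\varphi_i(t)$ for all $t\ge0$, ''$j$ dominates $i$ on $[0,\infty)$''; (3) otherwise, labelling the pair so that $\varphi_i(0)>\varphi_j(0)$, $t^*_{ij}>0$ is defined and the rule contains ''$i$ dominates $j$ on $[0,t^*_{ij})$'' and ''$j$ dominates $i$ on $[t^*_{ij},\infty)$''.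 A complete schedule is a potential schedule if it violates no relation of the rule. *)

From HB Require Import structures.
From mathcomp Require Import all_boot all_order all_algebra.
Set Implicit Arguments. Unset Strict Implicit. Unset Printing Implicit Defensive.
Import Order.TTheory GRing.Theory Num.Theory.
Local Open Scope ring_scope.

Section Sched.
Variables (R : realFieldType) (J : finType) (p w : J -> R).

Definition phi (j : J) (t : R) : R := w j / (p j * (p j + t)).

Definition tstar (i j : J) : R :=
  (w j * p i ^+ 2 - w i * p j ^+ 2) / (w i * p j - w j * p i).

Definition Ttot : R := \sum_(j : J) p j.

Definition complete_schedule (s : seq J) : Prop := perm_eq s (enum J).

Definition start (s : seq J) (j : J) : R := \sum_(k <- take (index j s) s) p k.

Definition phi_ge_all (a b : J) : Prop := forall t : R, 0 <= t -> phi b t <= phi a t.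

(* rule_rel a b I : the dominance rule contains "a dominates b on I" *)
Definition rule_rel (x y : J) (I : interval R) : Prop :=
  exists a b : J, [/\ a != b, (p a, w a) != (p b, w b) &
    [\/ [/\ phi_ge_all a b, x = a, y = b & I = `[0, +oo[ ],
        [/\ ~ phi_ge_all a b, phi_ge_all b a, x = b, y = a & I = `[0, +oo[ ] |
        [/\ ~ phi_ge_all a b, ~ phi_ge_all b a, phi b 0 < phi a 0 &
            (x = a /\ y = b /\ I = `[0, tstar a b[) \/
            (x = b /\ y = a /\ I = `[tstar a b, +oo[) ] ] ].

Definition violates (s : seq J) (a b : J) (I : interval R) : Prop :=
  [/\ (index b s < index a s)%N, start s b \in I & start s a - p b \in I].

Definition potential_schedule (s : seq J) : Prop :=
  complete_schedule s /\ forall a b I, rule_rel a b I -> ~ violates s a b I.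

End Sched.

From HB Require Import structures.
From mathcomp Require Import all_boot all_order all_algebra.
From mathcomp Require Import ring lra.
Set Implicit Arguments.
Unset Strict Implicit.
Unset Printing Implicit Defensive.

Import Order.TTheory GRing.Theory Num.Theory.
Local Open Scope ring_scope.

(* Since phi_i - phi_j has the sign of (w_i p_j - w_j p_i)(t - t* ), the curves
   cross exactly once, at t*, and phi_i(0) > phi_j(0) forces phi_j to be on top
   after t*.  So the rule contains "i dominates j on [0, t*[" and "j dominates i
   on [t*, +oo[".  If j precedes i, then t_j <= t_i - p_j < t*, violating the
   first relation; if i precedes j, then t* <= t_i <= t_j - p_i, violating the
   second. *)

Section StartTimes.
Variables (R : realFieldType) (J : finType) (p : J -> R).
Hypothesis hp : forall j, 0 < p j.

Lemma start_ge0 (s : seq J) (a : J) : 0 <= start p s a.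
Proof. by apply: sumr_ge0 => k _; apply: ltW. Qed.

Lemma start_addr_le (s : seq J) (a b : J) :
  b \in s -> (index a s < index b s)%N -> start p s a + p a <= start p s b.
Proof.
move=> bs ltab; have as_ : (index a s < size s)%N.
  by apply: ltn_trans ltab _; rewrite index_mem.
rewrite /start -(subnKC (ltnW ltab)) takeD big_cat /= (drop_nth a as_).
have gt0 : (0 < index b s - index a s)%N by rewrite subn_gt0.
rewrite nth_index -?index_mem // -(prednK gt0) /= big_cons addrA lerDl.
by apply: sumr_ge0 => k _; apply: ltW.
Qed.

End StartTimes.

Section PhiCrossing.
Variables (R : realFieldType) (J : finType) (p w : J -> R).
Hypothesis hp : forall j, 0 < p j.
Variables i j : J.
Hypothesis hne : w i * p j != w j * p i.

Let D := w i * p j - w j * p i.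

Lemma phi_subE (t : R) : 0 <= t ->
  phi p w i t - phi p w j t =
  D * (t - tstar p w i j) / (p i * p j * (p i + t) * (p j + t)).
Proof.
move=> t0; have D0 : w i * p j - w j * p i != 0 by rewrite subr_eq0.
rewrite /phi /tstar /D; field.
by rewrite D0 !lt0r_neq0 ?ltr_wpDr ?hp.
Qed.

Lemma phi_denom_gt0 (t : R) : 0 <= t -> 0 < p i * p j * (p i + t) * (p j + t).
Proof. by move=> t0; rewrite !mulr_gt0 ?ltr_wpDr ?hp. Qed.

Hypotheses (hphi0 : phi p w j 0 < phi p w i 0) (htstar0 : 0 < tstar p w i j).

Lemma crossing_coef_lt0 : D < 0.
Proof.
move: hphi0; rewrite -subr_gt0 phi_subE // sub0r mulrN.
rewrite pmulr_lgt0 ?invr_gt0 ?phi_denom_gt0 // oppr_gt0.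
by rewrite pmulr_llt0.
Qed.

Lemma phi_lt_after_crossing (t : R) :
  tstar p w i j < t -> phi p w i t < phi p w j t.
Proof.
move=> ltt; have t0 : 0 <= t := ltW (lt_trans htstar0 ltt).
rewrite -subr_lt0 phi_subE // pmulr_llt0 ?invr_gt0 ?phi_denom_gt0 //.
by rewrite nmulr_rlt0 ?crossing_coef_lt0 // subr_gt0.
Qed.

Lemma rule_rel_crossing :
  rule_rel p w i j (`[0, tstar p w i j[) /\
  rule_rel p w j i (`[tstar p w i j, +oo[).
Proof.
have neq_ij : i != j by apply: contraNneq hne => ->; rewrite mulrC.
have neq_pw : (p i, w i) != (p j, w j).
  by apply: contraNneq hne => -[-> ->]; rewrite mulrC.
have nge_ij : ~ phi_ge_all p w i j.
  have lt_t1 : tstar p w i j < tstar p w i j + 1 by rewrite ltrDl.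
  move=> /(_ _ (ltW (lt_trans htstar0 lt_t1))).
  by rewrite leNgt phi_lt_after_crossing.
have nge_ji : ~ phi_ge_all p w j i.
  by move=> /(_ 0 (lexx _)); rewrite leNgt hphi0.
by split; exists i, j; split=> //; apply: Or33; split=> //; [left | right].
Qed.

End PhiCrossing.

Theorem lemma2 (R : realFieldType) (J : finType) (p w : J -> R)
  (hp : forall j, 0 < p j) (hw : forall j, 0 < w j)
  (s : seq J) (hs : complete_schedule s) (i j : J)
  (hphi : phi p w j 0 < phi p w i 0)
  (hne : w i * p j != w j * p i)
  (ht0 : 0 < tstar p w i j) (htT : tstar p w i j < Ttot p)
  (hti1 : tstar p w i j <= start p s i)
  (hti2 : start p s i < tstar p w i j + p j) :
  ~ potential_schedule p w s.
Proof.
move=> [_ hpot]; have [rel_ij rel_ji] := rule_rel_crossing hp hne hphi ht0.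
have mem_s k : k \in s by rewrite (perm_mem hs) mem_enum.
have si0 := start_ge0 hp s i; have sj0 := start_ge0 hp s j.
case: (ltngtP (index i s) (index j s)) => idx.
- case: (hpot _ _ _ rel_ji); have := start_addr_le hp (mem_s j) idx.
  by split=> //; rewrite in_itv /= andbT; lra.
- case: (hpot _ _ _ rel_ij); have := start_addr_le hp (mem_s i) idx.
  by split=> //; rewrite in_itv /=; apply/andP; split; lra.
- by move: hne; rewrite (@index_inj _ i s i j (mem_s i) (mem_s j) idx) eqxx.
Qed.
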